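(* Suppose $\mathcal{T}'$ is obtained from $\mathcal{T}$ by collapsing two adjacent leaves labeled $D_{P_k,s_k} \circ \dots \circ D_{P_1,s_1}$ and $D_{Q_l,t_l} \circ \dots \circ D_{Q_1,t_1}$, where $s_i < 2\tau(P_i)$ and $t_i < 2\tau(Q_i)$ for all $i$. Then the label of the new leaf of $\mathcal{T}'$ has the form $D_{R_{k+1},u_{k+1}} \circ \cdots \circ D_{R_1,u_1}$, where $u_i < 2 \tau(R_i)$ for all $i$.
   Context: All knots are oriented; for a knot $K$, $K^r$ denotes $K$ with reversed orientation, $O$ denotes the unknot, and $\tau$ is the Ozsváth–Szabó concordance invariant (additive under connected sum). Let $B = B_1\cup B_2\cup B_3$ be the (oriented) Borromean rings. For knots $J,K$ and integers $s,t$, $D_{J,s}(K,t)$ is the knot obtained from $B_3$ by $s$-twisted infection by $J$ along $B_1$ and $t$-twisted infection by $K$ along $B_2$; $D_{J,s}(K)$ means $D_{J,s}(K,0)$, and $D_{J,s}$ is regarded as a satellite operator. (Known result: $\tau(D_{J,s}(K,t)) = 1$ if $s<2\tau(J)$ and $t<2\tau(K)$, $-1$ if $s>2\tau(J)$ and $t>2\tau(K)$, and $0$ otherwise.) A labeled binary tree is a binary tree each of whose leaves is labeled with a satellite operation (here, a composite of operators $D_{J,s}$). A collapse of a labeled tree $\mathcal{T}$ having two adjacent leaves labeled $D_{P_k,s_k} \circ \dots \circ D_{P_1,s_1}$ and $D_{Q_l,t_l} \circ \dots \circ D_{Q_1,t_1}$ produces the labeled tree $\mathcal{T}'$ obtained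 by deleting these two leaves and labeling the new leaf (their former parent) $D_{P_k,s_k} \circ \dots \circ D_{P_1,s_1} \circ D_{R,u}$, where $(R,u) = (Q_1 \# Q_1^r,\ 2t_1)$ if $l=1$, and $(R,u) = (D_{Q_1,t_1} \circ \dots \circ D_{Q_{l-2},t_{l-2}} (D_{Q_{l-1},t_{l-1}}(Q_l \# Q_l^r, 2t_l)),\ 0)$ if $l>1$. *)

From mathcomp Require Import all_boot all_order all_algebra.
Set Implicit Arguments. Unset Strict Implicit. Unset Printing Implicit Defensive.
Import Order.TTheory GRing.Theory Num.Theory.
Local Open Scope ring_scope.

(* A composite operator  D_{P_k,s_k} o ... o D_{P_1,s_1}  is represented by the
   list [:: (P_1,s_1); ...; (P_k,s_k)]  (first element = innermost operator). *)
Definition opseq (Knot : Type) := seq (Knot * int).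

(* Applying D_{J,s} (= D_{J,s}(-,0)) successively: the composite
   D_{Q_1,t_1} o ... o D_{Q_m,t_m} applied to K (Q_1 outermost). *)
Definition apply_outer (Knot : Type) (D : Knot -> int -> Knot -> int -> Knot)
  (qs : opseq Knot) (K : Knot) : Knot :=
  foldr (fun p K' => D p.1 p.2 K' 0) K qs.

Definition collapse_pair (Knot : Type) (csum : Knot -> Knot -> Knot)
  (rv : Knot -> Knot) (D : Knot -> int -> Knot -> int -> Knot)
  (qs : opseq Knot) : option (Knot * int) :=
  match rev qs with
  | [::] => None
  | [:: (Q1, t1)] => Some (csum Q1 (rv Q1), 2 * t1)
  | (Ql, tl) :: (Qm, tm) :: rest =>
      (* rest = reversed [:: (Q_1,t_1); ...; (Q_{l-2},t_{l-2})] *)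
      Some (apply_outer D (rev rest) (D Qm tm (csum Ql (rv Ql)) (2 * tl)), 0)
  end.

Inductive ltree (A : Type) : Type :=
| Leaf of A
| Node of ltree A & ltree A.

(* collapses T ps qs T' L : T' is obtained from T by collapsing two adjacent
   (sibling) leaves labeled ps and qs (in either left/right position); the new
   leaf has label L = D_{P_k,s_k} o ... o D_{P_1,s_1} o D_{R,u}. *)
Inductive collapses (Knot : Type) (csum : Knot -> Knot -> Knot)
  (rv : Knot -> Knot) (D : Knot -> int -> Knot -> int -> Knot)
  : ltree (opseq Knot) -> opseq Knot -> opseq Knot -> ltree (opseq Knot)
    -> opseq Knot -> Prop :=
| coll_here_l ps qs R u :
    collapse_pair csum rv D qs = Some (R, u) ->
    collapses csum rv D (Node (Leaf ps) (Leaf qs)) ps qs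
      (Leaf ((R, u) :: ps)) ((R, u) :: ps)
| coll_here_r ps qs R u :
    collapse_pair csum rv D qs = Some (R, u) ->
    collapses csum rv D (Node (Leaf qs) (Leaf ps)) ps qs
      (Leaf ((R, u) :: ps)) ((R, u) :: ps)
| coll_left T1 T1' T2 ps qs L :
    collapses csum rv D T1 ps qs T1' L ->
    collapses csum rv D (Node T1 T2) ps qs (Node T1' T2) L
| coll_right T1 T2 T2' ps qs L :
    collapses csum rv D T2 ps qs T2' L ->
    collapses csum rv D (Node T1 T2) ps qs (Node T1 T2') L.

From mathcomp Require Import all_boot all_order all_algebra.
From mathcomp Require Import zify.
Import Order.TTheory GRing.Theory Num.Theory.
Local Open Scope ring_scope.

(* Since tau(D_{J,s}(K,0)) = 1 as soon as s < 2 tau(J) and tau(K) > 0, a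
   composite of operators satisfying the bound has positive tau on every knot
   of positive tau.  For l = 1 the new pair (Q#Q^r, 2t) satisfies the bound
   because tau(Q#Q^r) = 2 tau(Q); for l > 1 the innermost knot
   D_{Q_{l-1},t_{l-1}}(Q_l#Q_l^r, 2t_l) has tau = 1, hence so does R, and
   u = 0 < 2 tau(R). *)

Set Implicit Arguments.

Section Collapse.

Variables (Knot : Type) (csum : Knot -> Knot -> Knot) (rv : Knot -> Knot).
Variables (D : Knot -> int -> Knot -> int -> Knot) (tau : Knot -> int).

Definition below_2tau (p : Knot * int) : bool := p.2 < 2 * tau p.1.

Lemma collapses_label T ps qs T' L :
  collapses csum rv D T ps qs T' L ->
  exists R u, collapse_pair csum rv D qs = Some (R, u) /\ L = (R, u) :: ps.
Proof. by elim=> // ps' qs' R u Hpair; exists R, u. Qed.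

Hypothesis tau_csum : forall J K, tau (csum J K) = tau J + tau K.
Hypothesis tau_rv : forall K, tau (rv K) = tau K.
Hypothesis tau_D : forall J s K t,
  tau (D J s K t) =
    if (s < 2 * tau J) && (t < 2 * tau K) then 1
    else if (2 * tau J < s) && (2 * tau K < t) then -1 else 0.

Lemma tau_csum_rv K : tau (csum K (rv K)) = 2 * tau K.
Proof. by rewrite tau_csum tau_rv; lia. Qed.

Lemma tau_D_below J s K t :
  s < 2 * tau J -> t < 2 * tau K -> tau (D J s K t) = 1.
Proof. by move=> Hs Ht; rewrite tau_D Hs Ht. Qed.

Lemma tau_apply_outer_gt0 qs K :
  all below_2tau qs -> 0 < tau K -> 0 < tau (apply_outer D qs K).
Proof.
elim: qs => [|[Q t] qs IH] //= /andP [Ht Hqs] HK.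
by rewrite tau_D_below //; lia.
Qed.

Lemma collapse_pair_below_2tau qs R u :
  all below_2tau qs -> collapse_pair csum rv D qs = Some (R, u) ->
  below_2tau (R, u).
Proof.
rewrite -all_rev /collapse_pair /below_2tau.
case: (rev qs) => [|[Ql tl] [|[Qm tm] rest]] //=.
- by rewrite andbT => Htl [<- <-] /=; rewrite tau_csum_rv; lia.
- move=> /and3P [Htl Htm Hrest] [<- <-] /=.
  have Hinner : tau (D Qm tm (csum Ql (rv Ql)) (2 * tl)) = 1.
    by apply: tau_D_below => //; rewrite tau_csum_rv; lia.
  suff : 0 < tau (apply_outer D (rev rest) (D Qm tm (csum Ql (rv Ql)) (2 * tl))).
    by lia.
  by apply: tau_apply_outer_gt0; rewrite ?all_rev ?Hinner.
Qed.

End Collapse.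

Theorem proposition3p3
  (Knot : Type) (csum : Knot -> Knot -> Knot) (rv : Knot -> Knot)
  (D : Knot -> int -> Knot -> int -> Knot) (tau : Knot -> int)
  (tau_csum : forall J K, tau (csum J K) = tau J + tau K)
  (tau_rv : forall K, tau (rv K) = tau K)
  (tau_D : forall J s K t,
     tau (D J s K t) =
       if (s < 2 * tau J) && (t < 2 * tau K) then 1
       else if (2 * tau J < s) && (2 * tau K < t) then -1 else 0)
  (T T' : ltree (opseq Knot)) (ps qs L : opseq Knot) :
  (0 < size ps)%N -> (0 < size qs)%N ->
  all (fun p => p.2 < 2 * tau p.1) ps ->
  all (fun q => q.2 < 2 * tau q.1) qs ->
  collapses csum rv D T ps qs T' L ->
  size L = (size ps).+1 /\ all (fun r => r.2 < 2 * tau r.1) L.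
Proof.
move=> _ _ Hps Hqs /collapses_label [R [u [Hpair ->]]].
split=> //=; rewrite Hps andbT.
exact: (collapse_pair_below_2tau _ _ _ _ tau_csum tau_rv tau_D _ Hqs Hpair).
Qed.
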